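(* For any $C\ge2$ and any $\eta\ge2$, there exists a forward-KL-regularized linear bandit instance (of dimension $2$) such that $C^{\pi^*}\ge C/2$ and $D^2_{\pi^*}=\Theta(1)$.
   Context: A forward-KL-regularized linear bandit instance (single context) consists of a finite action set $\mathcal A$, a feature map $\phi:\mathcal A\to\mathbb R^d$, a parameter set $\Theta\subset\mathbb R^d$ defining $\mathcal F=\{a\mapsto\langle\theta,\phi(a)\rangle:\theta\in\Theta\}$, a true parameter $\theta^*\in\Theta$ with $r(a)=\langle\theta^*,\phi(a)\rangle\in[0,1]$, a full-support reference policy $\pi^{\mathrm{ref}}\in\Delta(\mathcal A)$, and $\eta>0$. $\pi^*=\arg\max_{\pi\in\Delta(\mathcal A)}\sum_a r(a)\pi(a)-\eta^{-1}\mathrm{KL}(\pi^{\mathrm{ref}}\|\pi)$; $C^{\pi^*}=\max_a\pi^*(a)/\pi^{\mathrm{ref}}(a)$; $D^2(a)=\sup_{g,h\in\mathcal F}\frac{(g(a)-h(a))^2}{\mathbb E_{a'\sim\pi^{\mathrm{ref}}}[(g(a')-h(a'))^2]}$; $D^2_{\pi^*}=\mathbb E_{a\sim\pi^*}D^2(a)$. $\Theta(1)$ means bounded above and below by absolute positive constants. *)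

From HB Require Import structures.
From mathcomp Require Import all_boot all_order all_algebra.
From mathcomp Require Import all_classical all_reals all_analysis.
Set Implicit Arguments. Unset Strict Implicit. Unset Printing Implicit Defensive.
Import Order.TTheory GRing.Theory Num.Theory.
Local Open Scope classical_set_scope.
Local Open Scope ring_scope.

Section KLBandit.
Variable R : realType.

Definition inner (d : nat) (th x : 'I_d -> R) : R := \sum_(i < d) th i * x i.

Variable A : finType.

Definition is_policy (p : A -> R) : Prop :=
  (forall a, 0 <= p a) /\ \sum_(a : A) p a = 1.

Definition full_support (p : A -> R) : Prop := forall a, 0 < p a.

(* KL(p || q) = sum_a p(a) log (p(a)/q(a)), used only for full-support p, q *)
Definition KL (p q : A -> R) : R := \sum_(a : A) p a * ln (p a / q a).

Definition objective (r ref : A -> R) (eta : R) (p : A -> R) : R :=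
  \sum_(a : A) r a * p a - eta^-1 * KL ref p.

(* Policies without
   full support have KL(pi_ref||pi) = +oo (pi_ref has full support), hence
   objective -oo, so it suffices to compare against full-support policies. *)
Definition is_opt_policy (r ref : A -> R) (eta : R) (p : A -> R) : Prop :=
  is_policy p /\ full_support p /\
  forall p', is_policy p' -> full_support p' ->
    objective r ref eta p' <= objective r ref eta p.

Definition cover_coef (ref p : A -> R) : R :=
  \big[Num.max/0]_(a : A) (p a / ref a).

(* A pair with zero
   denominator (hence g = h on all of A, as ref has full support)
   contributes the value 0 (convention 0/0 = 0). *)
Definition D2_ratio (d : nat) (phi : A -> 'I_d -> R) (ref : A -> R)
    (th1 th2 : 'I_d -> R) (a : A) : R :=
  let diff := fun a' => inner th1 (phi a') - inner th2 (phi a') in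
  let den := \sum_(a' : A) ref a' * (diff a') ^+ 2 in
  if den == 0 then 0 else (diff a) ^+ 2 / den.

Definition D2 (d : nat) (Theta : set ('I_d -> R)) (phi : A -> 'I_d -> R)
    (ref : A -> R) (a : A) : R :=
  sup [set x | exists th1 th2, Theta th1 /\ Theta th2 /\
                  x = D2_ratio phi ref th1 th2 a].

Definition D2_pi (d : nat) (Theta : set ('I_d -> R)) (phi : A -> 'I_d -> R)
    (ref p : A -> R) : R :=
  \sum_(a : A) p a * D2 Theta phi ref a.

End KLBandit.

(* A full-support policy [p] satisfying the stationarity condition
   [r a + ref a / (eta p a) = lam] maximises the forward-KL objective, and
   uniquely so: for every other policy [q] the objective gap is
   [eta^-1 * \sum_a ref a * (ln x_a - (x_a - 1))] with [x_a = q a / p a], a sum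
   of nonpositive terms that vanishes only at [q = p].  On two actions with
   rewards [1] and [1/2] we pick [ref] so that the stationary policy puts [C]
   times the reference mass on the better action.  The features are multiples
   of the reward, so any two hypotheses differ by a multiple of the reward;
   as rewards lie within a factor [2] of each other, every ratio defining
   [D^2] lies in [[1/4, 4]]. *)

From HB Require Import structures.
From mathcomp Require Import all_boot all_order all_algebra.
From mathcomp Require Import all_classical all_reals all_analysis.
From mathcomp Require Import ring lra.
Set Implicit Arguments. Unset Strict Implicit. Unset Printing Implicit Defensive.
Import Order.TTheory GRing.Theory Num.Theory.
Local Open Scope classical_set_scope.
Local Open Scope ring_scope.

Section LnTangentGap.
Variable R : realType.

Definition ln_tangent_gap (x : R) : R := ln x - (x - 1).

Lemma ln_tangent_gap_le0 x : 0 < x -> ln_tangent_gap x <= 0.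
Proof.
by move=> x0; have := expR_ge1Dx (ln x); rewrite lnK ?posrE // /ln_tangent_gap; lra.
Qed.

Lemma ln_tangent_gap_eq0 x : 0 < x -> ln_tangent_gap x = 0 -> x = 1.
Proof.
move=> x0 gap0; apply/eqP; rewrite -ln_eq0 //; apply: contraTT isT => lnx0.
have := expR_gt1Dx lnx0; rewrite lnK ?posrE //; move: gap0; rewrite /ln_tangent_gap; lra.
Qed.

End LnTangentGap.

Section ForwardKLStationarity.
Variables (R : realType) (A : finType) (r ref : A -> R) (eta lam : R) (p : A -> R).
Hypotheses (eta_gt0 : 0 < eta) (ref_gt0 : full_support ref).
Hypotheses (p_policy : is_policy p) (p_gt0 : full_support p).
Hypothesis p_stationary : forall a, r a = lam - ref a / (eta * p a).

(* After substituting stationarity for [r], [lam] drops out because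
   [\sum_a (q a - p a) = 0]. *)
Lemma objective_sub_stationary q : is_policy q -> full_support q ->
  objective r ref eta q - objective r ref eta p =
  eta^-1 * \sum_a ref a * ln_tangent_gap (q a / p a).
Proof.
move=> [_ q1] q_gt0.
have pointwise a : r a * q a - eta^-1 * (ref a * ln (ref a / q a))
    - (r a * p a - eta^-1 * (ref a * ln (ref a / p a)))
  = lam * (q a - p a) + eta^-1 * (ref a * ln_tangent_gap (q a / p a)).
  have := ref_gt0 a; have := q_gt0 a; have := p_gt0 a => pa qa ra.
  rewrite p_stationary /ln_tangent_gap !ln_div ?posrE //; field.
  by rewrite !gt_eqF.
rewrite /objective /KL !mulr_sumr -!sumrB (eq_bigr _ (fun a _ => pointwise a)).
by rewrite big_split /= -mulr_sumr sumrB q1 (proj2 p_policy) subrr mulr0 add0r.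
Qed.

Lemma stationary_gap_term_le0 q a : full_support q ->
  ref a * ln_tangent_gap (q a / p a) <= 0.
Proof.
move=> q_gt0; apply: mulr_ge0_le0; first exact/ltW.
by rewrite ln_tangent_gap_le0 ?divr_gt0.
Qed.

Lemma stationary_gap_le0 q : full_support q ->
  \sum_a ref a * ln_tangent_gap (q a / p a) <= 0.
Proof. by move=> q_gt0; apply: sumr_le0 => a _; apply: stationary_gap_term_le0. Qed.

Lemma stationary_is_opt : is_opt_policy r ref eta p.
Proof.
split; [exact: p_policy | split; first exact: p_gt0].
move=> q q_policy q_gt0; rewrite -subr_le0 objective_sub_stationary //.
apply: mulr_ge0_le0; first by rewrite invr_ge0 ltW.
exact: stationary_gap_le0.
Qed.

Lemma stationary_opt_unique q : is_opt_policy r ref eta q -> q =1 p.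
Proof.
move=> [q_policy [q_gt0 q_opt]] a.
have gap0 : \sum_a ref a * ln_tangent_gap (q a / p a) = 0.
  apply/eqP; rewrite eq_le stationary_gap_le0 //=.
  have := q_opt p p_policy p_gt0; rewrite -subr_ge0 objective_sub_stationary //.
  by rewrite pmulr_rge0 ?invr_gt0.
have /eqP : - (ref a * ln_tangent_gap (q a / p a)) = 0.
  apply: (psumr_eq0P (P := predT)
    (F := fun b => - (ref b * ln_tangent_gap (q b / p b)))) => //.
  - by move=> b _; rewrite oppr_ge0 stationary_gap_term_le0.
  - by rewrite sumrN gap0 oppr0.
rewrite oppr_eq0 mulf_eq0 gt_eqF //= => /eqP /ln_tangent_gap_eq0.
by rewrite divr_gt0 // => /(_ isT) /divr1_eq.
Qed.

End ForwardKLStationarity.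

Lemma policy_mean_bounds (R : realType) (A : finType) (p f : A -> R) (k K : R) :
  is_policy p -> (forall a, k <= f a <= K) -> k <= \sum_a p a * f a <= K.
Proof.
move=> [p_ge0 p1] f_bd; apply/andP; split.
- rewrite -[k]mul1r -p1 mulr_suml; apply: ler_sum => a _.
  by rewrite ler_wpM2l //; case/andP: (f_bd a).
- rewrite -[K]mul1r -p1 mulr_suml; apply: ler_sum => a _.
  by rewrite ler_wpM2l //; case/andP: (f_bd a).
Qed.

Section D2Bounds.
Variables (R : realType) (A : finType) (d : nat) (phi : A -> 'I_d -> R).
Variable ref : A -> R.
Hypothesis ref_policy : is_policy ref.

Let diff th1 th2 a := inner th1 (phi a) - inner th2 (phi a).

Lemma D2_ratio_le th1 th2 a (K : R) : 0 <= K ->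
  (forall a', diff th1 th2 a ^+ 2 <= K * diff th1 th2 a' ^+ 2) ->
  D2_ratio phi ref th1 th2 a <= K.
Proof.
move=> K_ge0 cmp; rewrite /D2_ratio /=; case: ifPn => // den_neq0.
have [ref_ge0 ref1] := ref_policy.
have den_gt0 : 0 < \sum_a' ref a' * diff th1 th2 a' ^+ 2.
  by rewrite lt0r den_neq0 sumr_ge0 // => a' _; rewrite mulr_ge0 ?sqr_ge0.
rewrite ler_pdivrMr // mulr_sumr -[_ ^+ 2]mul1r -ref1 mulr_suml.
apply: ler_sum => a' _; by rewrite [X in _ <= X]mulrCA ler_wpM2l ?cmp.
Qed.

Lemma D2_ratio_ge th1 th2 a (k : R) : full_support ref ->
  diff th1 th2 a != 0 ->
  (forall a', k * diff th1 th2 a' ^+ 2 <= diff th1 th2 a ^+ 2) ->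
  k <= D2_ratio phi ref th1 th2 a.
Proof.
move=> ref_gt0 diff_neq0 cmp; rewrite /D2_ratio /=.
have [ref_ge0 ref1] := ref_policy.
have den_gt0 : 0 < \sum_a' ref a' * diff th1 th2 a' ^+ 2.
  rewrite (bigD1 a) //=; apply: ltr_pwDl.
  - by rewrite mulr_gt0 // exprn_even_gt0 ?diff_neq0 ?orbT.
  - by rewrite sumr_ge0 // => a' _; rewrite mulr_ge0 ?sqr_ge0.
rewrite gt_eqF // ler_pdivlMr // mulr_sumr -[_ ^+ 2 in X in _ <= X]mul1r -ref1 mulr_suml.
apply: ler_sum => a' _; by rewrite mulrCA ler_wpM2l ?cmp.
Qed.

Lemma D2_bounds (Theta : set ('I_d -> R)) th1 th2 a (k K : R) :
  (forall g h, Theta g -> Theta h -> D2_ratio phi ref g h a <= K) ->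
  Theta th1 -> Theta th2 -> k <= D2_ratio phi ref th1 th2 a ->
  k <= D2 Theta phi ref a <= K.
Proof.
move=> ratio_le Theta1 Theta2 k_le; rewrite /D2.
set S := [set x | _].
have S_ub : ubound S K by move=> _ [g [h [Tg [Th ->]]]]; exact: ratio_le.
have S_ratio : S (D2_ratio phi ref th1 th2 a) by exists th1, th2.
apply/andP; split.
- exact: le_trans k_le (ub_le_sup (ex_intro _ K S_ub) S_ratio).
- by apply: ge_sup => //; exists (D2_ratio phi ref th1 th2 a).
Qed.

End D2Bounds.

Lemma inner_cst (R : realType) (d : nat) (th : 'I_d -> R) (x : R) :
  inner th (fun _ => x) = (\sum_i th i) * x.
Proof. by rewrite /inner mulr_suml. Qed.

Section HardInstance.
Variable R : realType.

Definition hard_reward (b : bool) : R := if b then 1 else 2^-1.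
Definition hard_feature (b : bool) : 'I_2 -> R := fun _ => hard_reward b / 2.
Definition hard_theta : 'I_2 -> R := fun _ => 1.
Definition hard_Theta : set ('I_2 -> R) :=
  fun th => th = hard_theta \/ th = (fun _ => 0).

Lemma hard_reward_inner b : inner hard_theta (hard_feature b) = hard_reward b.
Proof.
rewrite inner_cst /hard_theta sumr_const card_ord.
by rewrite mulr_natl mulr2n; field.
Qed.

Lemma hard_reward_sq_le b b' : hard_reward b ^+ 2 <= 4 * hard_reward b' ^+ 2.
Proof. by case: b; case: b' => /=; rewrite ?expr1n; lra. Qed.

Lemma hard_feature_diff th1 th2 b :
  inner th1 (hard_feature b) - inner th2 (hard_feature b) =
  (\sum_i th1 i - \sum_i th2 i) / 2 * hard_reward b.
Proof. by rewrite !inner_cst; ring. Qed.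

Variables C eta : R.
Hypotheses (C_ge2 : 2 <= C) (eta_ge2 : 2 <= eta).

(* [hard_ref true = hard_opt true / C]; stationarity with multiplier
   [lam = 1 + 1/(C eta)] then forces the mass [subopt_mass] on the worse action. *)
Definition subopt_mass : R := 2 * (C - 1) / (C * eta).
Definition hard_opt (b : bool) : R := if b then 1 - subopt_mass else subopt_mass.
Definition hard_ref (b : bool) : R :=
  if b then (1 - subopt_mass) / C else 1 - (1 - subopt_mass) / C.

Lemma subopt_mass_gt0 : 0 < subopt_mass.
Proof.
have := C_ge2; have := eta_ge2 => eta2 C2.
by apply: divr_gt0; [lra | apply: mulr_gt0; lra].
Qed.

Lemma subopt_mass_lt1 : subopt_mass < 1.
Proof.
have := C_ge2; have := eta_ge2 => eta2 C2.
by rewrite ltr_pdivrMr ?mul1r; [nra | apply: mulr_gt0; lra].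
Qed.

Lemma hard_opt_policy : is_policy hard_opt.
Proof.
have := subopt_mass_gt0; have := subopt_mass_lt1 => s1 s0.
by split; [case => /=; lra | rewrite big_bool /=; ring].
Qed.

Lemma hard_opt_gt0 : full_support hard_opt.
Proof.
by have := subopt_mass_gt0; have := subopt_mass_lt1 => s1 s0; case => /=; lra.
Qed.

Lemma hard_ref_true_bounds : 0 < (1 - subopt_mass) / C < 1.
Proof.
have := C_ge2; have := subopt_mass_gt0; have := subopt_mass_lt1 => s1 s0 C2.
by rewrite divr_gt0 ?ltr_pdivrMr ?mul1r /=; lra.
Qed.

Lemma hard_ref_policy : is_policy hard_ref.
Proof.
have /andP[r0 r1] := hard_ref_true_bounds.
by split; [case => /=; lra | rewrite big_bool /=; ring].
Qed.

Lemma hard_ref_gt0 : full_support hard_ref.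
Proof. by have /andP[r0 r1] := hard_ref_true_bounds; case => /=; lra. Qed.

Lemma hard_opt_stationary b :
  hard_reward b = (1 + (C * eta)^-1) - hard_ref b / (eta * hard_opt b).
Proof.
have := C_ge2; have := eta_ge2; have := subopt_mass_gt0; have := subopt_mass_lt1.
move=> s1 s0 eta2 C2.
case: b; rewrite /hard_reward /hard_ref /hard_opt /=.
- by field; rewrite !gt_eqF ?subr_gt0 //; lra.
- by rewrite /subopt_mass; field; rewrite !gt_eqF //; lra.
Qed.

Lemma hard_eta_gt0 : 0 < eta.
Proof. by have := eta_ge2; lra. Qed.

Lemma hard_opt_is_opt : is_opt_policy hard_reward hard_ref eta hard_opt.
Proof.
exact: stationary_is_opt hard_eta_gt0 hard_ref_gt0 hard_opt_policy hard_opt_gt0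
  hard_opt_stationary.
Qed.

Lemma hard_opt_unique p : is_opt_policy hard_reward hard_ref eta p -> p =1 hard_opt.
Proof.
exact: (stationary_opt_unique hard_eta_gt0 hard_ref_gt0 hard_opt_policy hard_opt_gt0
  hard_opt_stationary).
Qed.

Lemma hard_cover_coef p : p =1 hard_opt -> C <= cover_coef hard_ref p.
Proof.
move=> p_opt; apply: le_trans (le_bigmax _ _ true); rewrite p_opt /=.
have := C_ge2; have := subopt_mass_lt1 => s1 C2.
by rewrite divKf ?gt_eqF //; lra.
Qed.

Lemma hard_ratio_le th1 th2 b : D2_ratio hard_feature hard_ref th1 th2 b <= 4.
Proof.
apply: (D2_ratio_le hard_ref_policy) => // b'.
rewrite !hard_feature_diff !exprMn [X in _ <= X]mulrCA.
by rewrite ler_wpM2l ?hard_reward_sq_le // mulr_ge0 ?sqr_ge0.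
Qed.

Lemma hard_ratio_ge b : 4^-1 <= D2_ratio hard_feature hard_ref hard_theta (fun _ => 0) b.
Proof.
have diff_eq b' : inner hard_theta (hard_feature b') - inner (fun _ => 0) (hard_feature b')
    = hard_reward b'.
  by rewrite hard_reward_inner inner_cst big1 // mul0r subr0.
have reward_gt0 : 0 < hard_reward b by case: b => /=; lra.
apply: (D2_ratio_ge hard_ref_policy hard_ref_gt0); rewrite diff_eq ?gt_eqF // => b'.
by rewrite diff_eq ler_pdivrMl // hard_reward_sq_le.
Qed.

Lemma hard_D2_bounds b : 4^-1 <= D2 hard_Theta hard_feature hard_ref b <= 4.
Proof.
apply: (D2_bounds (th1 := hard_theta) (th2 := fun _ => 0)).
- by move=> g h _ _; exact: hard_ratio_le.
- by left.
- by right.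
- exact: hard_ratio_ge.
Qed.

End HardInstance.

Theorem propositionB2 (R : realType) :
  exists c1 c2 : R, 0 < c1 /\ 0 < c2 /\
  forall C eta : R, 2 <= C -> 2 <= eta ->
  exists (A : finType) (phi : A -> 'I_2 -> R) (Theta : set ('I_2 -> R))
         (thstar : 'I_2 -> R) (ref : A -> R),
    Theta thstar /\
    (forall a : A, 0 <= inner thstar (phi a) <= 1) /\
    is_policy ref /\ full_support ref /\
    (exists p : A -> R, is_opt_policy (fun a => inner thstar (phi a)) ref eta p) /\
    (forall p : A -> R, is_opt_policy (fun a => inner thstar (phi a)) ref eta p ->
       C / 2 <= cover_coef ref p /\
       c1 <= D2_pi Theta phi ref p <= c2).
Proof.
exists 4^-1, 4; do 2 split => //.
move=> C eta C_ge2 eta_ge2.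
exists bool, (hard_feature R), (@hard_Theta R), (hard_theta R), (hard_ref C eta).
have -> : (fun b => inner (hard_theta R) (hard_feature R b)) = @hard_reward R.
  exact/funext/hard_reward_inner.
split; first by left.
split; first by move=> b; rewrite hard_reward_inner; case: b => /=; lra.
split; first exact: hard_ref_policy.
split; first exact: hard_ref_gt0.
split; first by exists (hard_opt C eta); exact: hard_opt_is_opt.
move=> p p_opt; split.
- apply: le_trans (hard_cover_coef C_ge2 eta_ge2 (hard_opt_unique C_ge2 eta_ge2 p_opt)).
  by rewrite ler_pdivrMr //; lra.
- apply: policy_mean_bounds; first by case: p_opt.
  exact: hard_D2_bounds.
Qed.
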